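(* Let $G=(V\cup C,E)$ be a protograph and let $\epsilon\in[0,1]$. Suppose the degree-2 subgraph $G_2$ contains a cycle. Then for every edge $e_i$ of that cycle and every $t\ge 0$, the BEC density evolution quantities satisfy $x_t(i)\ge \epsilon^{t+1}$. In particular, for $\epsilon>0$, $x_t(i)$ does not decay double-exponentially in $t$ (i.e., there are no positive constants $\alpha,\beta,K$ with $x_t(i)\le K\exp(-\beta 2^{\alpha t})$ for all large $t$).
   Context: A protograph is a finite bipartite multigraph $G=(V\cup C,E)$ with variable (bit) nodes $V$, check nodes $C$, and ordered edges $E=\{e_1,\dots,e_{|E|}\}$; parallel edges between a variable node and a check node are allowed. For an edge $e$, $v(e)$ and $c(e)$ denote its variable-node and check-node endpoints. The degree of a node is the number of incident edges counted with multiplicity. For an edge $e$, $E_c(e)=\{i: c(e_i)=c(e),\ e_i\neq e\}$ and $E_v(e)=\{i: v(e_i)=v(e),\ e_i\ne e\}$. The degree-2 subgraph $G_2$ of $G$ consists of all degree-2 variable nodes, all edges incident to them, and the check nodes incident to those edges; a cycle in $G_2$ may have length $2$ (two parallel edges between the same variable and check node). Protograph density evolution over BEC$(\epsilon)$: $x_0(i)=\epsilon$ for all $i$, and for $t\ge 0$, $y_{t+1}(j)=1-\prod_{i\in E_c(e_j)}(1-x_t(i))$, $x_{t+1}(i)=\epsilon\prod_{j\in E_v(e_i)}y_{t+1}(j)$ (empty products equal $1$). *)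

From Stdlib Require Import Reals List Arith Bool.
Import ListNotations.
Open Scope R_scope.
Open Scope bool_scope.

(* Parallel edges are allowed (pv, pc need not be jointly
   injective). *)
Record protograph := Protograph {
  nV : nat; nC : nat; nE : nat;
  pv : nat -> nat;
  pc : nat -> nat;
  pv_lt : forall i, (i < nE)%nat -> (pv i < nV)%nat;
  pc_lt : forall i, (i < nE)%nat -> (pc i < nC)%nat
}.

Definition Ec (G : protograph) (j : nat) : list nat :=
  filter (fun i => Nat.eqb (pc G i) (pc G j) && negb (Nat.eqb i j)) (seq 0 (nE G)).
Definition Ev (G : protograph) (i : nat) : list nat :=
  filter (fun j => Nat.eqb (pv G j) (pv G i) && negb (Nat.eqb j i)) (seq 0 (nE G)).

Definition prodR (l : list nat) (f : nat -> R) : R :=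
  fold_right (fun k acc => f k * acc) 1 l.

Definition vdeg (G : protograph) (v : nat) : nat :=
  length (filter (fun i => Nat.eqb (pv G i) v) (seq 0 (nE G))).

Fixpoint DE_x (G : protograph) (eps : R) (t : nat) : nat -> R :=
  match t with
  | O => fun _ => eps
  | S t' => fun i =>
      eps * prodR (Ev G i)
              (fun j => 1 - prodR (Ec G j) (fun i' => 1 - DE_x G eps t' i'))
  end.

Definition DE_y (G : protograph) (eps : R) (t : nat) (j : nat) : R :=
  1 - prodR (Ec G j) (fun i' => 1 - DE_x G eps t i').

(* A cycle of length 2k (k >= 1) in the degree-2 subgraph G_2, given as the
   edge sequence cyc 0, cyc 1, ..., cyc (2k-1):
   edges cyc(2m), cyc(2m+1) share variable node v_m, edges cyc(2m+1),
   cyc(2m+2 mod 2k) share check node c_m; edges are distinct, the variable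
   nodes v_0..v_{k-1} are distinct, the check nodes c_0..c_{k-1} are
   distinct, and every variable node on the cycle has degree 2 in G
   (so all cycle edges belong to G_2).  k = 1 is a length-2 cycle made of
   two parallel edges. *)
Definition deg2_cycle (G : protograph) (k : nat) (cyc : nat -> nat) : Prop :=
  (1 <= k)%nat /\
  (forall a, (a < 2 * k)%nat -> (cyc a < nE G)%nat) /\
  (forall a b, (a < 2 * k)%nat -> (b < 2 * k)%nat -> cyc a = cyc b -> a = b) /\
  (forall m, (m < k)%nat -> pv G (cyc (2 * m)%nat) = pv G (cyc (2 * m + 1)%nat)) /\
  (forall m, (m < k)%nat ->
      pc G (cyc (2 * m + 1)%nat) = pc G (cyc ((2 * m + 2) mod (2 * k))%nat)) /\
  (forall m n, (m < k)%nat -> (n < k)%nat ->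
      pv G (cyc (2 * m)%nat) = pv G (cyc (2 * n)%nat) -> m = n) /\
  (forall m n, (m < k)%nat -> (n < k)%nat ->
      pc G (cyc (2 * m + 1)%nat) = pc G (cyc (2 * n + 1)%nat) -> m = n) /\
  (forall m, (m < k)%nat -> vdeg G (pv G (cyc (2 * m)%nat)) = 2%nat).

(* Along a cycle of the degree-2 subgraph, each edge [e] has exactly one other
   edge [e'] at its variable node, and [e'] shares its check node with the next
   cycle edge [c].  Since all messages lie in [[0,1]], the density evolution
   update gives [x_{t+1}(e) = eps * y_{t+1}(e') >= eps * x_t(c)], and induction
   along the cycle yields [x_t(e) >= eps^(t+1)].  A geometric lower bound is
   incompatible with a doubly exponential upper bound, because [2^(alpha t)]
   eventually dominates every linear function of [t]. *)
From Stdlib Require Import Reals List Arith Lia Lra.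
Import ListNotations.
Open Scope R_scope.

Lemma prodR_unit_interval (l : list nat) (f : nat -> R) :
  (forall k, 0 <= f k <= 1) -> 0 <= prodR l f <= 1.
Proof.
  intros Hf; induction l as [|x l IH]; simpl; [lra|].
  destruct (Hf x); split; [apply Rmult_le_pos; lra|].
  rewrite <- (Rmult_1_r 1); apply Rmult_le_compat; lra.
Qed.

Lemma prodR_le_factor (l : list nat) (f : nat -> R) (i : nat) :
  (forall k, 0 <= f k <= 1) -> In i l -> prodR l f <= f i.
Proof.
  intros Hf; induction l as [|x l IH]; simpl; [tauto|].
  destruct (Hf x); destruct (prodR_unit_interval l f Hf).
  intros [<-|Hi].
  - rewrite <- (Rmult_1_r (f x)) at 2; apply Rmult_le_compat_l; lra.
  - specialize (IH Hi).
    apply Rle_trans with (1 * prodR l f); [apply Rmult_le_compat_r|]; lra.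
Qed.

Lemma DE_x_unit_interval (G : protograph) (eps : R) :
  0 <= eps <= 1 -> forall t i, 0 <= DE_x G eps t i <= 1.
Proof.
  intros Heps t; induction t as [|t IH]; intros i; simpl; [lra|].
  assert (Hy : forall j, 0 <= 1 - prodR (Ec G j) (fun i' => 1 - DE_x G eps t i') <= 1).
  { intros j.
    assert (Hx : forall i', 0 <= 1 - DE_x G eps t i' <= 1)
      by (intros i'; specialize (IH i'); lra).
    destruct (prodR_unit_interval (Ec G j) _ Hx); lra. }
  destruct (prodR_unit_interval (Ev G i) _ Hy) as [Hp0 Hp1].
  split; [apply Rmult_le_pos; lra|].
  apply Rle_trans with (eps * 1); [apply Rmult_le_compat_l|]; lra.
Qed.

Lemma filter_andb {A : Type} (f g : A -> bool) (l : list A) :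
  filter (fun x => f x && g x) l = filter g (filter f l).
Proof.
  induction l as [|x l IH]; simpl; [reflexivity|].
  destruct (f x); simpl; [destruct (g x); simpl|]; rewrite IH; reflexivity.
Qed.

Lemma Ev_deg2 (G : protograph) (e e' : nat) :
  (e < nE G)%nat -> (e' < nE G)%nat -> e <> e' -> pv G e = pv G e' ->
  vdeg G (pv G e) = 2%nat -> Ev G e = [e'].
Proof.
  intros He He' Hne Hpv Hdeg; unfold Ev, vdeg in *.
  rewrite filter_andb.
  set (inv := fun i => Nat.eqb (pv G i) (pv G e)).
  assert (Hin : forall i, (i < nE G)%nat -> pv G i = pv G e ->
                     In i (filter inv (seq 0 (nE G)))).
  { intros i Hi Hp; apply filter_In; split; [apply in_seq; lia|].
    unfold inv; rewrite Hp; apply Nat.eqb_refl. }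
  pose proof (Hin e He eq_refl) as Hine.
  pose proof (Hin e' He' (eq_sym Hpv)) as Hine'.
  pose proof (NoDup_filter inv (seq_NoDup (nE G) 0)) as Hnd.
  fold inv in Hdeg; revert Hine Hine' Hnd Hdeg.
  generalize (filter inv (seq 0 (nE G))).
  intros [|x [|y [|z r]]] Hine Hine' Hnd Hdeg; simpl in Hdeg; try discriminate.
  apply NoDup_cons_iff in Hnd as [Hxy _]; simpl in Hxy.
  destruct Hine as [->|[->|[]]]; destruct Hine' as [->|[->|[]]]; try congruence;
    simpl; rewrite Nat.eqb_refl, (proj2 (Nat.eqb_neq e' e)) by congruence;
    reflexivity.
Qed.

Lemma In_Ec (G : protograph) (c b : nat) :
  (c < nE G)%nat -> pc G c = pc G b -> c <> b -> In c (Ec G b).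
Proof.
  intros Hc Hpc Hne; unfold Ec; apply filter_In; split; [apply in_seq; lia|].
  rewrite Hpc, Nat.eqb_refl, (proj2 (Nat.eqb_neq c b) Hne); reflexivity.
Qed.

Lemma DE_x_S_ge (G : protograph) (eps : R) (t e e' c : nat) :
  0 <= eps <= 1 -> Ev G e = [e'] -> In c (Ec G e') ->
  DE_x G eps (S t) e >= eps * DE_x G eps t c.
Proof.
  intros Heps HEv Hc; cbn [DE_x]; rewrite HEv; unfold prodR at 1; cbn [fold_right].
  rewrite Rmult_1_r; apply Rle_ge, Rmult_le_compat_l; [lra|].
  assert (Hx : forall i', 0 <= 1 - DE_x G eps t i' <= 1)
    by (intros i'; destruct (DE_x_unit_interval G eps Heps t i'); lra).
  pose proof (prodR_le_factor _ _ c Hx Hc); lra.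
Qed.

Section Deg2Cycle.

Variables (G : protograph) (k : nat) (cyc : nat -> nat).
Hypothesis Hcyc : deg2_cycle G k cyc.

Lemma deg2_cycle_var_partner (a : nat) :
  (a < 2 * k)%nat -> exists b, (b < 2 * k)%nat /\ Ev G (cyc a) = [cyc b].
Proof.
  destruct Hcyc as (Hk & Hlt & Hinj & Hv & _ & _ & _ & Hdeg); intros Ha.
  destruct (Nat.Even_or_Odd a) as [[m ->]|[m ->]].
  - exists (2 * m + 1)%nat; split; [lia|].
    apply Ev_deg2; try (apply Hlt; lia); try (apply Hv; lia); try (apply Hdeg; lia).
    intros E; apply Hinj in E; lia.
  - exists (2 * m)%nat; split; [lia|].
    apply Ev_deg2; try (apply Hlt; lia).
    + intros E; apply Hinj in E; lia.
    + symmetry; apply Hv; lia.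
    + rewrite <- Hv by lia; apply Hdeg; lia.
Qed.

Lemma deg2_cycle_check_neighbour (b : nat) :
  (b < 2 * k)%nat -> exists c, (c < 2 * k)%nat /\ In (cyc c) (Ec G (cyc b)).
Proof.
  destruct Hcyc as (Hk & Hlt & Hinj & _ & Hc & _); intros Hb.
  assert (Hdiff : forall c, (c < 2 * k)%nat -> c <> b -> cyc c <> cyc b)
    by (intros c Hc' Hne E; apply Hinj in E; auto).
  destruct (Nat.Even_or_Odd b) as [[m ->]|[m ->]].
  - destruct m as [|m].
    + exists (2 * (k - 1) + 1)%nat; split; [lia|].
      apply In_Ec; [apply Hlt; lia| |apply Hdiff; lia].
      rewrite (Hc (k - 1)%nat) by lia.
      replace (2 * (k - 1) + 2)%nat with (1 * (2 * k))%nat by lia.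
      rewrite Nat.Div0.mod_mul; reflexivity.
    + exists (2 * m + 1)%nat; split; [lia|].
      apply In_Ec; [apply Hlt; lia| |apply Hdiff; lia].
      rewrite (Hc m), Nat.mod_small by lia; do 2 f_equal; lia.
  - set (c := ((2 * m + 2) mod (2 * k))%nat).
    assert (Hck : (c < 2 * k)%nat) by (apply Nat.mod_upper_bound; lia).
    exists c; split; [exact Hck|].
    apply In_Ec; [apply Hlt; exact Hck|symmetry; apply Hc; lia|apply Hdiff; [exact Hck|]].
    unfold c; destruct (Nat.eq_dec (S m) k) as [<-|Hm].
    + replace (2 * m + 2)%nat with (1 * (2 * S m))%nat by lia.
      rewrite Nat.Div0.mod_mul; lia.
    + rewrite Nat.mod_small; lia.
Qed.

Lemma DE_x_deg2_cycle_ge (eps : R) :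
  0 <= eps <= 1 ->
  forall t a, (a < 2 * k)%nat -> DE_x G eps t (cyc a) >= eps ^ (t + 1).
Proof.
  intros Heps t; induction t as [|t IH]; intros a Ha; [simpl; lra|].
  destruct (deg2_cycle_var_partner a Ha) as (b & Hb & HEv).
  destruct (deg2_cycle_check_neighbour b Hb) as (c & Hc & HEc).
  apply Rge_trans with (eps * DE_x G eps t (cyc c));
    [exact (DE_x_S_ge G eps t _ _ _ Heps HEv HEc)|].
  replace (S t + 1)%nat with (S (t + 1)) by lia; simpl.
  apply Rle_ge, Rmult_le_compat_l; [lra|]; apply Rge_le, IH, Hc.
Qed.

End Deg2Cycle.

Lemma exp_ge_sqr_half (x : R) : 0 <= x -> (x / 2) * (x / 2) <= exp x.
Proof.
  intros Hx.
  replace (exp x) with (exp (x / 2) * exp (x / 2)) by (rewrite <- exp_plus; f_equal; field).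
  pose proof (exp_ineq1_le (x / 2)); pose proof (exp_pos (x / 2)).
  apply Rmult_le_compat; lra.
Qed.

Lemma exp_eventually_gt_linear (s A B : R) (T : nat) :
  0 < s -> exists t, (T <= t)%nat /\ A + B * INR t < exp (s * INR t).
Proof.
  intros Hs.
  set (q := s * s / 4).
  assert (Hq : 0 < q) by (unfold q; nra).
  destruct (INR_archimed q (Rabs A + Rabs B) Hq) as [n Hn].
  exists (n + T + 1)%nat; split; [lia|].
  set (t := INR (n + T + 1)).
  assert (Ht1 : 1 <= t) by (unfold t; rewrite <- INR_1; apply le_INR; lia).
  assert (Hnt : INR n <= t) by (unfold t; apply le_INR; lia).
  assert (Hexp := exp_ge_sqr_half (s * t) ltac:(nra)).
  pose proof (Rle_abs A); pose proof (Rle_abs B); pose proof (Rabs_pos A).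
  assert (Hqt : Rabs A + Rabs B < q * t) by nra.
  assert (Hsq : q * t * t <= exp (s * t)) by (unfold q; nra).
  nra.
Qed.

Lemma geometric_not_double_exp_decay (f : nat -> R) (eps : R) :
  0 < eps -> (forall t, f t >= eps ^ (t + 1)) ->
  ~ (exists alpha beta K : R, 0 < alpha /\ 0 < beta /\ 0 < K /\
       exists T : nat, forall t : nat, (T <= t)%nat ->
         f t <= K * exp (- beta * Rpower 2 (alpha * INR t))).
Proof.
  intros Heps Hf (alpha & beta & K & Ha & Hb & HK & T & HT).
  set (c := ln eps).
  assert (Hs : 0 < alpha * ln 2)
    by (apply Rmult_lt_0_compat; [lra|pose proof ln_lt_2; lra]).
  destruct (exp_eventually_gt_linear (alpha * ln 2) ((ln K - c) / beta) (- c / beta) T Hs)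
    as (t & Ht & Hlin).
  assert (Hlow : exp (INR (t + 1) * c) <= f t).
  { unfold c; rewrite <- ln_pow, exp_ln by (try apply pow_lt; lra).
    apply Rge_le, Hf. }
  assert (Hup : f t <= exp (ln K - beta * exp (alpha * ln 2 * INR t))).
  { unfold Rminus; rewrite exp_plus, exp_ln by exact HK.
    replace (alpha * ln 2 * INR t) with (alpha * INR t * ln 2) by ring.
    rewrite Ropp_mult_distr_l; apply HT, Ht. }
  assert (Hexp : INR (t + 1) * c <= ln K - beta * exp (alpha * ln 2 * INR t)).
  { destruct (Rle_lt_dec (INR (t + 1) * c) (ln K - beta * exp (alpha * ln 2 * INR t)))
      as [Hle|Hgt]; [exact Hle|].
    apply exp_increasing in Hgt; lra. }
  rewrite plus_INR in Hexp; simpl INR in Hexp.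
  assert (Hlin' : beta * ((ln K - c) / beta + - c / beta * INR t)
                  < beta * exp (alpha * ln 2 * INR t))
    by (apply Rmult_lt_compat_l; assumption).
  replace (beta * ((ln K - c) / beta + - c / beta * INR t))
    with (ln K - c - c * INR t) in Hlin' by (field; lra).
  lra.
Qed.

Theorem mainTheorem2 (G : protograph) (eps : R) (k : nat) (cyc : nat -> nat) :
  0 <= eps <= 1 ->
  deg2_cycle G k cyc ->
  forall a, (a < 2 * k)%nat ->
    (forall t : nat, DE_x G eps t (cyc a) >= eps ^ (t + 1)) /\
    (0 < eps ->
       ~ (exists alpha beta K : R, 0 < alpha /\ 0 < beta /\ 0 < K /\
            exists T : nat, forall t : nat, (T <= t)%nat ->
              DE_x G eps t (cyc a) <= K * exp (- beta * Rpower 2 (alpha * INR t)))).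
Proof.
  intros Heps Hcyc a Ha.
  assert (Hge : forall t, DE_x G eps t (cyc a) >= eps ^ (t + 1))
    by (intros t; exact (DE_x_deg2_cycle_ge G k cyc Hcyc eps Heps t a Ha)).
  split; [exact Hge|].
  intros Hpos; exact (geometric_not_double_exp_decay _ eps Hpos Hge).
Qed.
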